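(* Let $\mathcal{I}$ be an interval hypergraph on $[n]$ and $A,B$ acyclic orientations of $\mathcal{I}$. Then $A\le B$ in $P_{\mathcal{I}}$ if and only if $A(I)\le B(I)$ for all $I\in\mathcal{I}$.
   Context: An interval hypergraph $\mathcal{I}$ on $[n]$ is a collection of intervals of $[n]$ containing all singletons. An orientation is a map $O:\mathcal{I}\to[n]$ with $O(I)\in I$; it is acyclic if there are no $H_1,\dots,H_k\in\mathcal{I}$, $k\ge2$, with $O(H_{i+1})\in H_i\setminus\{O(H_i)\}$ for $i\in[k-1]$ and $O(H_1)\in H_k\setminus\{O(H_k)\}$. Orientations $O\ne O'$ are related by an increasing flip (from $O$ to $O'$) if there exist $1\le i<j\le n$ such that for all $H$: if $O(H)\ne O'(H)$ then $O(H)=i$, $O'(H)=j$; and if $\{i,j\}\subseteq H$ then $O(H)=i\iff O'(H)=j$. $P_{\mathcal{I}}$ is the transitive closure of the increasing flip relation on the acyclic orientations of $\mathcal{I}$. *)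

(* Vertex set [n] is modelled by 'I_n = {0,...,n-1}
   (order-isomorphic to {1,...,n}). An interval is a pair (a,b) of vertices,
   denoting {x | a <= x <= b}. *)
From mathcomp Require Import all_boot.
Set Implicit Arguments.
Unset Strict Implicit.
Unset Printing Implicit Defensive.

Definition interval (n : nat) := ('I_n * 'I_n)%type.

Definition in_interval (n : nat) (I : interval n) (x : 'I_n) : bool :=
  (I.1 <= x <= I.2)%N.

Definition interval_hypergraph (n : nat) (HG : {set interval n}) : Prop :=
  (forall I, I \in HG -> (I.1 <= I.2)%N) /\
  (forall i : 'I_n, (i, i) \in HG).

Definition edge (n : nat) (HG : {set interval n}) :=
  {I : interval n | I \in HG}.

Definition is_orientation (n : nat) (HG : {set interval n})
  (O : edge HG -> 'I_n) : Prop :=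
  forall H : edge HG, in_interval (val H) (O H).

Definition cycle_rel (n : nat) (HG : {set interval n})
  (O : edge HG -> 'I_n) : rel (edge HG) :=
  fun H H' => in_interval (val H) (O H') && (O H' != O H).

Definition acyclic (n : nat) (HG : {set interval n})
  (O : edge HG -> 'I_n) : Prop :=
  forall s : seq (edge HG), (2 <= size s)%N -> ~~ cycle (cycle_rel O) s.

Definition increasing_flip (n : nat) (HG : {set interval n})
  (O O' : edge HG -> 'I_n) : Prop :=
  O <> O' /\
  exists i j : 'I_n, (i < j)%N /\
    forall H : edge HG,
      (O H <> O' H -> O H = i /\ O' H = j) /\
      (in_interval (val H) i && in_interval (val H) j ->
         (O H = i <-> O' H = j)).

Definition acyclic_flip (n : nat) (HG : {set interval n})
  (O O' : edge HG -> 'I_n) : Prop :=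
  is_orientation O /\ acyclic O /\ is_orientation O' /\ acyclic O' /\
  increasing_flip O O'.

Inductive P_le (n : nat) (HG : {set interval n}) :
  (edge HG -> 'I_n) -> (edge HG -> 'I_n) -> Prop :=
| P_le_refl O : P_le O O
| P_le_step O O' O'' : acyclic_flip O O' -> P_le O' O'' -> P_le O O''.

From mathcomp Require Import all_boot.
From Stdlib Require Import FunctionalExtensionality.

Set Implicit Arguments.
Unset Strict Implicit.
Unset Printing Implicit Defensive.

(** An orientation [O] is acyclic iff the digraph on the vertices with arcs [O(H) -> v]
   for [v \in H] is acyclic, and flips only raise values, which gives one
   direction. Conversely, if [A <= B] pointwise and [A <> B], let [i] be the
   largest value [A(H)] with [A(H) < B(H)], and among the vertices [w > i] with
   an [A]-arc [i -> w] pick [j] with no other such [w] reaching [j] in [B]'s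
   digraph. Flipping every [H] with [A(H) = i] and [j \in H] to [j] stays below
   [B]; it stays acyclic because the only [A]-path from [i] to [j] is the arc
   itself: a path through a vertex below [i] is trapped below [i] (hyperedges
   are intervals), and along a path above [i] the arcs of [A] are arcs of [B].
   Induction on [\sum_H (B H - A H)] concludes. *)

Section Reachability.

Variable T : finType.
Implicit Types (e : rel T) (x y z j : T).

Definition dag e := forall x y, e x y -> ~~ connect e y x.

Definition avoid e j : rel T := fun a b => e a b && (a != j).

Lemma connect_ind e y (P : T -> Prop) :
  P y -> (forall x z, e x z -> connect e z y -> P z -> P x) ->
  forall x, connect e x y -> P x.
Proof.
move=> Py IH x /connectP [p]; elim: p x => [|z p IHp] x /=; first by move=> _ <-.
case/andP=> exz pz ly; apply: (IH x z exz); last exact: IHp.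
by apply/connectP; exists p.
Qed.

Lemma connect_closed_fwd e (P : pred T) x y :
  (forall a b, P a -> e a b -> P b) -> P x -> connect e x y -> P y.
Proof.
move=> clP Px /connectP [p]; elim: p x Px => [|z p IHp] x Px /=; first by move=> _ ->.
by case/andP=> exz pz ly; exact: IHp (clP _ _ Px exz) pz ly.
Qed.

Lemma connect_first e x y : connect e x y -> x != y -> exists2 z, e x z & connect e z y.
Proof.
move=> /connectP [[|z p] /=]; first by move=> _ ->; rewrite eqxx.
by case/andP=> exz pz ly _; exists z => //; apply/connectP; exists p.
Qed.

Lemma dag_connect_antisym e : dag e -> antisymmetric (connect e).
Proof.
move=> dag_e x y /andP [cxy cyx]; apply/eqP/negPn/negP => /(connect_first cxy) [z exz czy].
by move/dag_e: exz; rewrite (connect_trans czy cyx).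
Qed.

Lemma dag_sub e e' : subrel e e' -> dag e' -> dag e.
Proof.
move=> sub dag_e' x y /sub/dag_e'; apply: contra; apply: connect_sub => a b /sub.
exact: connect1.
Qed.

Lemma dag_source e (X : pred T) x0 : dag e -> X x0 ->
  exists2 j, X j & forall w, X w -> w != j -> ~~ connect e w j.
Proof.
move=> dag_e Xx0.
have [j Xj minj] := arg_minnP (fun v => #|[pred w | connect e w v]|) Xx0.
exists j => // w Xw wj; apply/negP => cwj.
have := minj w Xw; rewrite leqNgt => /negP; apply; apply: proper_card.
apply/properP; split.
  by apply/subsetP => x; rewrite !inE => cxw; exact: connect_trans cxw cwj.
exists j; rewrite !inE ?connect0 //; apply/negP => cjw.
by move: wj; rewrite (dag_connect_antisym dag_e (introT andP (conj cwj cjw))) eqxx.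
Qed.

Lemma connect_avoidW e j x y : connect (avoid e j) x y -> connect e x y.
Proof. by apply: connect_sub => a b /andP [eab _]; exact: connect1. Qed.

Lemma connect_avoid e j x y : connect e x y ->
  connect (avoid e j) x y \/
  connect e x j /\ exists2 z, e j z & connect (avoid e j) z y.
Proof.
move: x; apply: connect_ind => [|a z eaz czy [cay | [czj [w ejw cwy]]]]; first by left.
- case: (eqVneq a j) eaz => [-> | aj] eaz.
    by right; split; [exact: connect0 | exists z].
  by left; apply: connect_trans cay; apply: connect1; rewrite /avoid eaz aj.
- by right; split; [exact: connect_trans (connect1 eaz) czj | exists w].
Qed.

Lemma dag_avoid e j : dag (avoid e j) ->
  (forall y, e j y -> ~~ connect (avoid e j) y j) -> dag e.
Proof.
move=> dag_avoid_e no_return u v euv; apply/negP => cvu.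
have no_cycle_through_j z : e j z -> connect e z j -> False.
  move=> ejz /(connect_avoid j) [czj | [_ [z' ejz' cz'j]]].
    by move/negP: (no_return z ejz).
  by move/negP: (no_return z' ejz').
case: (connect_avoid j cvu) => [cvu' | [cvj [z ejz czu]]].
  case: (eqVneq u j) => [uj | uj]; first by subst u; move/negP: (no_return v euv).
  have /dag_avoid_e : avoid e j u v by rewrite /avoid euv uj.
  by rewrite cvu'.
apply: (no_cycle_through_j z ejz); apply: connect_trans (connect_avoidW czu) _.
exact: connect_trans (connect1 euv) cvj.
Qed.

End Reachability.

Lemma in_interval_between n (I : interval n) (a c x : 'I_n) :
  in_interval I a -> in_interval I c -> a <= x <= c -> in_interval I x.
Proof.
move=> /andP [Ia _] /andP [_ cI] /andP [ax xc].
by rewrite /in_interval (leq_trans Ia ax) (leq_trans xc cI).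
Qed.

Lemma ltn_sum (T : finType) (f g : T -> nat) x :
  (forall y, f y <= g y) -> f x < g x -> \sum_y f y < \sum_y g y.
Proof.
move=> le_fg lt_fgx; rewrite (bigD1 x) //= [X in _ < X](bigD1 x) //=.
by rewrite -addSn leq_add // leq_sum.
Qed.

Section OrientationGraph.

Variables (n : nat) (HG : {set interval n}).
Implicit Types (O : edge HG -> 'I_n) (H : edge HG) (i j u v w : 'I_n).

Definition arcs O : rel 'I_n :=
  fun u v => [exists H, (O H == u) && in_interval (val H) v && (v != u)].

Lemma arcsP O u v :
  reflect (exists H, [/\ O H = u, in_interval (val H) v & v != u]) (arcs O u v).
Proof.
apply: (iffP existsP) => [[H /andP [/andP [/eqP OHu vH] vu]] | [H [OHu vH vu]]].
  by exists H.
by exists H; rewrite OHu eqxx vH vu.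
Qed.

Lemma dag_cycle_rel O : acyclic O -> dag (cycle_rel O).
Proof.
move=> acO H H' rHH'; apply/negP => /connectP [p].
case/lastP: p => [|p H''] /=.
  by move=> _ eH'H; move: rHH'; rewrite eH'H /cycle_rel eqxx andbF.
rewrite last_rcons => pth eH''; subst H''.
by have := acO (H :: H' :: p) isT; rewrite /cycle /= rHH' pth.
Qed.

Lemma connect_arcs_lift O u v H : connect (arcs O) v u ->
  in_interval (val H) v -> v != O H ->
  exists2 H', connect (cycle_rel O) H H' & in_interval (val H') u && (u != O H').
Proof.
move=> cvu; move: v cvu H; apply: connect_ind => [H uH uO | a z aaz _ IH H aH aO].
  by exists H => //; rewrite uH uO.
have /arcsP [H1 [OH1 zH1 za]] := aaz.
have [|H' cH1H' uH'] := IH H1 zH1; first by rewrite OH1.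
exists H' => //; apply: connect_trans cH1H'; apply: connect1.
by rewrite /cycle_rel OH1 aH aO.
Qed.

Lemma acyclicP O : acyclic O <-> dag (arcs O).
Proof.
split=> [acO u v /arcsP [H [OHu vH vu]] | dagO].
  apply/negP => /connect_arcs_lift /(_ vH) [|H' cHH' /andP [uH' uO]]; first by rewrite OHu.
  have rH'H : cycle_rel O H' H by rewrite /cycle_rel OHu uH' uO.
  by move/negP: (dag_cycle_rel acO rH'H).
move=> [|H [|H1 s]] // _; apply/negP => cyc.
have sub : subrel (cycle_rel O) (relpre O (arcs O)).
  by move=> a b /andP [bO ab]; apply/arcsP; exists a.
have := sub_path sub cyc; rewrite -path_map /= => /andP [r pth].
move/negP: (dagO _ _ r); apply; apply/connectP.
by exists (map O (rcons s H)); rewrite // last_map last_rcons.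
Qed.

Definition flip O i j H := if (O H == i) && in_interval (val H) j then j else O H.

Lemma flip_orientation O i j : is_orientation O -> is_orientation (flip O i j).
Proof. by move=> oO H; rewrite /flip; case: ifP => [/andP [_ ->] | _]. Qed.

Lemma flip_ge O i j H : i <= j -> O H <= flip O i j H.
Proof. by rewrite /flip; case: ifP => [/andP [/eqP -> _] | _]. Qed.

Lemma avoid_arcs_flip O i j : subrel (avoid (arcs (flip O i j)) j) (arcs O).
Proof.
move=> u v /andP [/arcsP [H [FHu vH vu]] uj]; apply/arcsP; exists H; split => //.
by move: FHu; rewrite /flip; case: ifP => // _ ju; move: uj; rewrite -ju eqxx.
Qed.

Lemma arcs_flip_from_source O i j w :
  i != j -> arcs (flip O i j) i w -> arcs O i w /\ w != j.
Proof.
move=> ij /arcsP [H [FHi wH wi]]; move: FHi; rewrite /flip.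
case: ifP => [_ ji | /negbT]; first by move: ij; rewrite ji eqxx.
move=> not_flipped OHi; split; first by apply/arcsP; exists H.
by apply: contraNneq not_flipped => wj; rewrite OHi eqxx -wj.
Qed.

Lemma arcs_flip_from_target O i j y : arcs (flip O i j) j y ->
  arcs O j y \/
  exists H, [/\ O H = i, in_interval (val H) j, in_interval (val H) y & y != j].
Proof.
move=> /arcsP [H [FHj yH yj]]; move: FHj; rewrite /flip.
case: ifP => [/andP [/eqP OHi jH] _ | _ OHj]; first by right; exists H.
by left; apply/arcsP; exists H.
Qed.

Lemma flip_increasing O i j :
  i < j -> dag (arcs O) -> arcs O i j -> increasing_flip O (flip O i j).
Proof.
move=> ltij dagO aij; have /arcsP [H1 [OH1 jH1 _]] := aij; split.
  move/(congr1 (@^~ H1)); rewrite /flip OH1 eqxx jH1 /= => eij.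
  by move: ltij; rewrite eij ltnn.
exists i, j; split=> // H; split.
  by rewrite /flip; case: ifP => [/andP [/eqP -> _] | _].
move=> /andP [iH jH]; rewrite /flip; split=> [-> | ]; first by rewrite eqxx jH.
case: ifP => [/andP [/eqP -> _] // | _ OHj].
have aji : arcs O j i by apply/arcsP; exists H; rewrite OHj iH neq_ltn ltij.
by move/dagO: aij; rewrite (connect1 aji).
Qed.

Lemma increasing_flip_le O O' H : increasing_flip O O' -> O H <= O' H.
Proof.
move=> [_ [i [j [ltij flO]]]]; case: (eqVneq (O H) (O' H)) => [-> // | neq].
by have [-> ->] := (flO H).1 (elimN eqP neq); exact: ltnW.
Qed.

Section FlipTowards.

Variables (A B : edge HG -> 'I_n) (i j : 'I_n) (Hm : edge HG).
Hypotheses (oA : is_orientation A) (oB : is_orientation B).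
Hypotheses (dagA : dag (arcs A)) (dagB : dag (arcs B)).
Hypothesis leAB : forall H, A H <= B H.
Hypotheses (AHm : A Hm = i) (ltiBHm : i < B Hm).
Hypothesis B_eq_A_above : forall H, i < A H -> B H = A H.
Hypothesis ltij : i < j.
Hypothesis j_source : forall w, i < w -> arcs A i w -> w != j -> ~~ connect (arcs B) w j.

(* Below [i], [A]-paths cannot cross [i]: an arc leaving [a < i] for [c >= i]
   comes from a hyperedge containing [i], hence [a -> i] would close a cycle. *)
Lemma connect_between_ge x : connect (arcs A) i x -> connect (arcs A) x j -> i <= x.
Proof.
move=> cix cxj; rewrite leqNgt; apply/negP => ltxi.
pose below := [pred z : 'I_n | (z < i) && connect (arcs A) i z].
suff /andP [ltji _] : below j by move: ltij; rewrite ltnNge (ltnW ltji).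
apply: (connect_closed_fwd _ _ cxj); last by rewrite /= ltxi.
move=> a c /andP [ltai cia] aac; have /arcsP [H [AHa cH _]] := aac.
case: (leqP i c) => [leic | ltci].
  2: by rewrite /= ltci (connect_trans cia (connect1 aac)).
have iH : in_interval (val H) i.
  by apply: (in_interval_between (oA H) cH); rewrite AHa (ltnW ltai).
have /dagA : arcs A a i by apply/arcsP; exists H; rewrite AHa iH neq_ltn ltai orbT.
by rewrite cia.
Qed.

Lemma arcs_between_gt w :
  arcs A i w -> connect (arcs A) w j -> i < w.
Proof.
move=> aiw cwj; rewrite ltn_neqAle (connect_between_ge (connect1 aiw) cwj) andbT.
by have /arcsP [_ [_ _ wi]] := aiw; rewrite eq_sym.
Qed.

Lemma connect_avoid_arcs_B x :
  connect (avoid (arcs A) i) x j -> connect (arcs A) i x -> connect (arcs B) x j.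
Proof.
move: x; apply: connect_ind => [_ | a z /andP [aaz ai] czj IH cia]; first exact: connect0.
have caj : connect (arcs A) a j := connect_trans (connect1 aaz) (connect_avoidW czj).
have ltia : i < a by rewrite ltn_neqAle eq_sym ai connect_between_ge.
apply: connect_trans (IH (connect_trans cia (connect1 aaz))); apply: connect1.
have /arcsP [H [AHa zH za]] := aaz.
by apply/arcsP; exists H; rewrite B_eq_A_above AHa.
Qed.

Lemma no_detour w : arcs A i w -> w != j -> ~~ connect (arcs A) w j.
Proof.
move=> aiw wj; apply/negP => cwj.
case: (connect_avoid i cwj) => [cwj' | [cwi _]]; last by move/dagA: aiw; rewrite cwi.
move/negP: (j_source (arcs_between_gt aiw cwj) aiw wj); apply.
exact: connect_avoid_arcs_B cwj' (connect1 aiw).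
Qed.

Lemma dag_arcs_flip : dag (arcs (flip A i j)).
Proof.
have ij : i != j by rewrite neq_ltn ltij.
apply: (@dag_avoid _ _ j); first exact: dag_sub (@avoid_arcs_flip A i j) dagA.
have cA z : connect (avoid (arcs (flip A i j)) j) z j -> connect (arcs A) z j.
  by apply: connect_sub => a b /avoid_arcs_flip/connect1.
move=> y /arcs_flip_from_target [ajy | [H [AHi jH yH yj]]]; apply/negP => cyj.
  by move/dagA: ajy; rewrite cA.
case: (eqVneq y i) => [yi | yi].
  subst y; have [w /andP [aiw _] cwj] := connect_first cyj ij.
  have [aiwA wj] := arcs_flip_from_source ij aiw.
  by move/negP: (no_detour aiwA wj); apply; exact: cA.
have aiy : arcs A i y by apply/arcsP; exists H.
by move/negP: (no_detour aiy yj); apply; exact: cA.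
Qed.

Lemma flip_le H : flip A i j H <= B H.
Proof.
rewrite /flip; case: ifP => [/andP [/eqP AHi jH] | _]; last exact: leAB.
rewrite leqNgt; apply/negP => ltBj.
have aBj : arcs B (B H) j by apply/arcsP; exists H; rewrite jH neq_ltn ltBj orbT.
have leiB : i <= B H by rewrite -AHi leAB.
case: (ltngtP i (B H)) => [ltiB | ltBi | eiB].
- have aiB : arcs A i (B H).
    by apply/arcsP; exists H; rewrite AHi oB neq_ltn ltiB orbT.
  have Bj : B H != j by rewrite neq_ltn ltBj.
  by move/negP: (j_source ltiB aiB Bj); apply; exact: connect1.
- by move: leiB; rewrite leqNgt ltBi.
- have aBmi : arcs B (B Hm) i.
    by apply/arcsP; exists Hm; split; rewrite // ?neq_ltn ?ltiBHm // -AHm.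
  have aij_B : arcs B i j by rewrite (val_inj eiB).
  case: (eqVneq (B Hm) j) => [Bmj | Bmj].
    by move/dagB: aBmi; rewrite Bmj (connect1 aij_B).
  have aiBm : arcs A i (B Hm).
    by apply/arcsP; exists Hm; rewrite AHm oB neq_ltn ltiBHm orbT.
  move/negP: (j_source ltiBHm aiBm Bmj); apply.
  exact: connect_trans (connect1 aBmi) (connect1 aij_B).
Qed.

End FlipTowards.

Lemma exists_flip_towards A B H0 :
  is_orientation A -> acyclic A -> is_orientation B -> acyclic B ->
  (forall H, A H <= B H) -> A H0 < B H0 ->
  exists A', [/\ acyclic_flip A A', forall H, A H <= A' H <= B H & exists H, A H < A' H].
Proof.
move=> oA acA oB acB leAB ltH0; have /acyclicP dagA := acA; have /acyclicP dagB := acB.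
have [Hm ltHm maxHm] := @arg_maxnP _ H0 (fun H => A H < B H) (fun H => A H) ltH0.
set i := A Hm in ltHm maxHm.
have B_eq_A_above H : i < A H -> B H = A H.
  move=> ltiA; apply: val_inj; apply/eqP; rewrite eqn_leq leAB andbT leqNgt.
  by apply/negP => /maxHm; rewrite /= leqNgt ltiA.
pose X := [pred w : 'I_n | (i < w) && arcs A i w].
have XBm : X (B Hm).
  by rewrite /= ltHm; apply/arcsP; exists Hm; rewrite oB neq_ltn ltHm orbT.
have [j /andP [ltij aij] minj] := dag_source dagB XBm.
have j_source w : i < w -> arcs A i w -> w != j -> ~~ connect (arcs B) w j.
  by move=> ltiw aiw; apply: minj; rewrite /= ltiw.
exists (flip A i j); split.
- do 2 split=> //; split; first exact: flip_orientation.
  split; last exact: flip_increasing.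
  by apply/acyclicP; exact: dag_arcs_flip oA dagA B_eq_A_above ltij j_source.
- move=> H; have le_flip_B := flip_le oA oB dagB leAB (erefl _) ltHm j_source H.
  by rewrite flip_ge ?(ltnW ltij) ?le_flip_B.
- by have /arcsP [H1 [AH1 jH1 _]] := aij; exists H1; rewrite /flip AH1 eqxx jH1.
Qed.

Lemma P_le_pointwise A B : P_le A B -> forall H, A H <= B H.
Proof.
elim=> // O O' O'' [_ [_ [_ [_ flOO']]]] _ IH H.
exact: leq_trans (increasing_flip_le H flOO') (IH H).
Qed.

Lemma pointwise_P_le A B :
  is_orientation A -> acyclic A -> is_orientation B -> acyclic B ->
  (forall H, A H <= B H) -> P_le A B.
Proof.
move=> oA acA oB acB; have [k] := ubnP (\sum_H (B H - A H)).
elim: k A oA acA => // k IH A oA acA ltk leAB.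
case: (pickP [pred H | A H < B H]) => [H0 ltH0 | eqAB]; last first.
  rewrite (_ : A = B); first exact: P_le_refl.
  apply: functional_extensionality => H; apply/val_inj/eqP.
  by rewrite eqn_leq leAB leqNgt; apply/negbT/eqAB.
have [A' [flAA' leA' [H1 ltA1]]] := exists_flip_towards oA acA oB acB leAB ltH0.
apply: (P_le_step flAA'); have [_ [_ [oA' [acA' _]]]] := flAA'.
apply: IH => // [|H]; last by case/andP: (leA' H).
have lt_measure : \sum_H (B H - A' H) < \sum_H (B H - A H).
  have leA'B1 : A' H1 <= B H1 by case/andP: (leA' H1).
  apply: (ltn_sum _ (ltn_sub2l (leq_trans ltA1 leA'B1) ltA1)) => H.
  by case/andP: (leA' H) => leAA' _; exact: leq_sub2l.
by apply: leq_trans lt_measure _; rewrite -ltnS.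
Qed.

End OrientationGraph.

Theorem proposition3p13 (n : nat) (HG : {set interval n})
  (A B : edge HG -> 'I_n) :
  interval_hypergraph HG ->
  is_orientation A -> acyclic A ->
  is_orientation B -> acyclic B ->
  (P_le A B <-> (forall I : edge HG, (A I <= B I)%N)).
Proof.
move=> _ oA acA oB acB; split; [exact: P_le_pointwise | exact: pointwise_P_le].
Qed.
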